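(* Let $n,d\ge1$. For $k\ge1$ let $\mathbf M_k\in\mathbb R^{n\times n}$ be invertible; for $k\ge0$ let $\mathbf H_k\in\mathbb R^{d\times n}$, $\mathbf R_k$ symmetric positive definite, ${\boldsymbol\Omega}_k=\mathbf H_k^{\mathrm T}\mathbf R_k^{-1}\mathbf H_k$. Let $\mathbf M_{k:0}=\mathbf M_k\cdots\mathbf M_1$ ($\mathbf M_{0:0}=\mathbf I_n$), let $\mathbf P_0$ be symmetric positive semi-definite and $\mathbf P_{k+1}=\mathbf M_{k+1}(\mathbf I_n+\mathbf P_k{\boldsymbol\Omega}_k)^{-1}\mathbf P_k\mathbf M_{k+1}^{\mathrm T}$ for $k\ge0$. Then for every $k\ge0$, $\mathrm{rank}(\mathbf P_{k+1})=\mathrm{rank}(\mathbf P_k)$ and $$\mathrm{Im}(\mathbf P_k)=\mathbf M_{k:0}\big(\mathrm{Im}(\mathbf P_0)\big),$$ where $\mathrm{Im}(\mathbf A)=\{\mathbf A{\mathbf x}:{\mathbf x}\in\mathbb R^n\}$ is the column space. *)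

From mathcomp Require Import all_boot all_order all_algebra.
Set Implicit Arguments. Unset Strict Implicit. Unset Printing Implicit Defensive.
Import Order.TTheory GRing.Theory Num.Theory.
Local Open Scope ring_scope.

Definition sym_pd (R : realFieldType) (m : nat) (A : 'M[R]_m) : Prop :=
  A^T = A /\ forall x : 'cV[R]_m, x != 0 -> 0 < (x^T *m A *m x) ord0 ord0.

Definition sym_psd (R : realFieldType) (m : nat) (A : 'M[R]_m) : Prop :=
  A^T = A /\ forall x : 'cV[R]_m, 0 <= (x^T *m A *m x) ord0 ord0.

Definition Omega (R : realFieldType) (n d : nat)
  (H : nat -> 'M[R]_(d, n)) (Rm : nat -> 'M[R]_d) (k : nat) : 'M[R]_n :=
  (H k)^T *m invmx (Rm k) *m H k.

Fixpoint Mprod (R : realFieldType) (n : nat) (M : nat -> 'M[R]_n) (k : nat)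
  : 'M[R]_n :=
  match k with
  | 0 => 1%:M
  | k'.+1 => M k'.+1 *m Mprod M k'
  end.

Fixpoint Pseq (R : realFieldType) (n d : nat) (M : nat -> 'M[R]_n)
  (H : nat -> 'M[R]_(d, n)) (Rm : nat -> 'M[R]_d) (P0 : 'M[R]_n) (k : nat)
  : 'M[R]_n :=
  match k with
  | 0 => P0
  | k'.+1 => let Pk := Pseq M H Rm P0 k' in
      M k'.+1 *m invmx (1%:M + Pk *m Omega H Rm k') *m Pk *m (M k'.+1)^T
  end.

(* column space Im(A) = {A x}; compared via the row spaces of transposes *)
Definition colspace_eq (R : fieldType) (m p q : nat)
  (A : 'M[R]_(m, p)) (B : 'M[R]_(m, q)) : Prop := (A^T == B^T)%MS.

(* Every P_k is symmetric positive semi-definite, and for symmetric positive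
   semi-definite P and Omega the matrix I + P Omega is invertible: a left kernel
   vector v gives (P v)^T Omega (P v) = - v^T P v, so both forms vanish, hence
   v P Omega = 0 and v = 0.  The push-through identity
   (I + P Omega)^-1 P = P (I + Omega P)^-1 rewrites the recursion as
   P_{k+1} = M_{k+1} (P_k N_k) M_{k+1}^T with N_k invertible.  This keeps P_{k+1}
   positive semi-definite, and right multiplication by an invertible matrix does
   not change a column space, so Im P_{k+1} = M_{k+1} Im P_k and the ranks agree. *)

From mathcomp Require Import all_boot all_order all_algebra.
From mathcomp Require Import ring lra.
Import Order.TTheory GRing.Theory Num.Theory.
Set Implicit Arguments. Unset Strict Implicit.
Local Open Scope ring_scope.

Lemma cV_dot_self_eq0 (R : realDomainType) (m : nat) (y : 'cV[R]_m) :
  (y^T *m y) ord0 ord0 = 0 -> y = 0.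
Proof.
rewrite mxE; under eq_bigr do rewrite mxE.
move=> /psumr_eq0P y0; apply/matrixP => i j; rewrite (ord1 j) !mxE.
by apply/eqP; rewrite -sqrf_eq0 expr2 y0 // => k _; rewrite -expr2 sqr_ge0.
Qed.

Lemma invmx_1_add_mul_push (R : comUnitRingType) m (P O : 'M[R]_m) :
  1%:M + P *m O \in unitmx -> 1%:M + O *m P \in unitmx ->
  invmx (1%:M + P *m O) *m P = P *m invmx (1%:M + O *m P).
Proof.
move=> uPO uOP.
have comm : (1%:M + P *m O) *m P = P *m (1%:M + O *m P).
  by rewrite mulmxDl mulmxDr mul1mx mulmx1 mulmxA.
apply: (canRL (mulmxK uOP)).
by rewrite -mulmxA -comm mulmxA mulVmx ?mul1mx.
Qed.

Section PositiveSemiDefinite.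
Variables (R : realFieldType) (m : nat).
Implicit Types (A P O : 'M[R]_m) (x y : 'cV[R]_m).

Lemma form_sym A x y : A^T = A -> x^T *m A *m y = y^T *m A *m x.
Proof.
move=> sA; apply/matrixP => i j; rewrite !ord1.
transitivity ((x^T *m A *m y)^T ord0 ord0); first by rewrite [RHS]mxE.
by rewrite !trmx_mul trmxK sA mulmxA.
Qed.

Lemma form_lincomb A x y (s t : R) : A^T = A ->
  ((s *: x + t *: y)^T *m A *m (s *: x + t *: y)) ord0 ord0 =
  s ^+ 2 * (x^T *m A *m x) ord0 ord0 + 2 * s * t * (y^T *m A *m x) ord0 ord0
  + t ^+ 2 * (y^T *m A *m y) ord0 ord0.
Proof.
move=> sA; have trZ c (v : 'cV[R]_m) : (c *: v)^T = c *: v^T.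
  by apply/matrixP => i j; rewrite !mxE.
rewrite [(_ + _)^T]linearD /= !trZ !(mulmxDl, mulmxDr) -!(scalemxAl, scalemxAr).
rewrite (form_sym x y sA).
set a := x^T *m A *m x; set b := y^T *m A *m x; set c := y^T *m A *m y.
by rewrite !mxE; ring.
Qed.

Lemma sym_psd_form_eq0 A x :
  sym_psd A -> (x^T *m A *m x) ord0 ord0 = 0 -> A *m x = 0.
Proof.
(* With a := |A x|^2 and b := (A x)^T A (A x), the form at (b + 1) x - a A x
   equals -a^2 (b + 2), so it can only be nonnegative when a = 0. *)
move=> [sA psdA] qx0; set y := A *m x.
set a := (y^T *m y) ord0 ord0; set b := (y^T *m A *m y) ord0 ord0.
have yAx : (y^T *m A *m x) ord0 ord0 = a by rewrite -mulmxA.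
have := psdA ((b + 1) *: x + (- a) *: y).
rewrite form_lincomb // qx0 yAx -/b => q_ge0.
have b_ge0 : 0 <= b := psdA y.
have a0 : a = 0 by nra.
exact: cV_dot_self_eq0.
Qed.

Lemma sym_pd_psd A : sym_pd A -> sym_psd A.
Proof.
move=> [sA pdA]; split=> // x; have [->|x0] := eqVneq x 0; last exact/ltW/pdA.
by rewrite mulmx0 mxE.
Qed.

Lemma sym_pd_unitmx A : sym_pd A -> A \in unitmx.
Proof.
move=> [_ pdA]; rewrite unitmxE unitfE; apply/det0P => -[v v0 vA0].
by have := pdA v^T; rewrite trmx_eq0 trmxK vA0 mul0mx mxE ltxx => /(_ v0).
Qed.

Lemma sym_pd_invmx A : sym_pd A -> sym_pd (invmx A).
Proof.
move=> pdA; have uA := sym_pd_unitmx pdA; have [sA qA] := pdA.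
split=> [|x x0]; first by rewrite trmx_inv sA.
set y := invmx A *m x; have xE : x = A *m y by rewrite mulmxA mulmxV ?mul1mx.
have y0 : y != 0 by apply: contraNneq x0 => y0; rewrite xE y0 mulmx0.
suff -> : x^T *m invmx A *m x = y^T *m A *m y by exact: qA.
by rewrite {1}xE trmx_mul sA -!mulmxA.
Qed.

Lemma sym_psd_congr p (S : 'M[R]_p) (B : 'M[R]_(p, m)) :
  sym_psd S -> sym_psd (B^T *m S *m B).
Proof.
move=> [sS qS]; split=> [|x]; first by rewrite !trmx_mul trmxK sS mulmxA.
by have := qS (B *m x); rewrite trmx_mul !mulmxA.
Qed.

Lemma unitmx_1_add_psd_mul P O :
  sym_psd P -> sym_psd O -> 1%:M + P *m O \in unitmx.
Proof.
move=> [sP qP] psdO; rewrite unitmxE unitfE; apply/det0P => -[v v0].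
rewrite mulmxDr mulmx1 mulmxA => /eqP; rewrite addr_eq0 => /eqP vE.
have vPO : v *m P *m O = - v by rewrite {2}vE opprK.
set x := P *m v^T; have xT : x^T = v *m P by rewrite trmx_mul trmxK sP.
have qx : (x^T *m O *m x) ord0 ord0 = - (v^T^T *m P *m v^T) ord0 ord0.
  by rewrite xT vPO mulNmx trmxK mulmxA mxE.
have qx0 : (x^T *m O *m x) ord0 ord0 = 0.
  by have := qP v^T; have := psdO.2 x; rewrite qx; lra.
have xO : v *m P *m O = 0.
  by rewrite -xT -(proj1 psdO) -trmx_mul (sym_psd_form_eq0 psdO qx0) trmx0.
by move: v0; rewrite vE xO oppr0 eqxx.
Qed.

Lemma sym_psd_update P O :
  sym_psd P -> sym_psd O -> sym_psd (P *m invmx (1%:M + O *m P)).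
Proof.
move=> psdP psdO; have [sP qP] := psdP; have [sO qO] := psdO.
set N := 1%:M + O *m P; have uN : N \in unitmx by exact: unitmx_1_add_psd_mul.
have NT : N^T = 1%:M + P *m O by rewrite [N^T]linearD /= trmx1 trmx_mul sP sO.
split.
  rewrite trmx_mul trmx_inv NT sP invmx_1_add_mul_push //.
  by rewrite -NT unitmx_tr.
move=> x; set z := invmx N *m x.
have xT : x^T = z^T *m N^T by rewrite -trmx_mul /z mulmxA mulmxV ?mul1mx.
have -> : x^T *m (P *m invmx N) *m x = x^T *m P *m z by rewrite !mulmxA.
rewrite xT NT mulmxDr mulmx1 !mulmxDl mxE; apply: addr_ge0; first exact: qP.
by have := qO (P *m z); rewrite trmx_mul sP !mulmxA.
Qed.
End PositiveSemiDefinite.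

Section ColumnSpace.
Variable F : fieldType.

Lemma colspace_eq_refl m p (A : 'M[F]_(m, p)) : colspace_eq A A.
Proof. exact/eqmxP/eqmx_refl. Qed.

Lemma colspace_eq_trans m p q r (A : 'M[F]_(m, p)) (B : 'M[F]_(m, q))
    (C : 'M[F]_(m, r)) :
  colspace_eq A B -> colspace_eq B C -> colspace_eq A C.
Proof. by move=> /eqmxP AB /eqmxP BC; apply/eqmxP/(eqmx_trans AB). Qed.

Lemma colspace_eq_rank m p q (A : 'M[F]_(m, p)) (B : 'M[F]_(m, q)) :
  colspace_eq A B -> \rank A = \rank B.
Proof. by move=> /eqmx_rank; rewrite !mxrank_tr. Qed.

Lemma colspace_eq_mulmx_unitr m p (A : 'M[F]_(m, p)) (N : 'M[F]_p) :
  N \in unitmx -> colspace_eq (A *m N) A.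
Proof.
move=> uN; apply/eqmxP; rewrite trmx_mul; apply: eqmxMfull.
by rewrite row_full_unit unitmx_tr.
Qed.

Lemma colspace_eq_mull m r p q (C : 'M[F]_(r, m)) (A : 'M[F]_(m, p))
    (B : 'M[F]_(m, q)) :
  colspace_eq A B -> colspace_eq (C *m A) (C *m B).
Proof. by move=> /eqmxP AB; apply/eqmxP; rewrite !trmx_mul; apply: eqmxMr. Qed.

Lemma mxrank_mul_unitl m p (C : 'M[F]_m) (A : 'M[F]_(m, p)) :
  C \in unitmx -> \rank (C *m A) = \rank A.
Proof. by rewrite -row_full_unit => /eqmxMfull->. Qed.
End ColumnSpace.

Section CovarianceRecursion.
Variables (R : realFieldType) (n d : nat).
Variables (M : nat -> 'M[R]_n) (H : nat -> 'M[R]_(d, n)) (Rm : nat -> 'M[R]_d).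
Variable P0 : 'M[R]_n.
Hypotheses (pdR : forall k, sym_pd (Rm k)) (psdP0 : sym_psd P0).
Local Notation P := (Pseq M H Rm P0).

Lemma Omega_psd k : sym_psd (Omega H Rm k).
Proof. exact/sym_psd_congr/sym_pd_psd/sym_pd_invmx. Qed.

Lemma PseqS_update k : sym_psd (P k) ->
  P k.+1 = M k.+1 *m (P k *m invmx (1%:M + Omega H Rm k *m P k)) *m (M k.+1)^T.
Proof.
move=> psdP /=; rewrite -invmx_1_add_mul_push.
- by rewrite !mulmxA.
- exact: unitmx_1_add_psd_mul psdP (Omega_psd k).
- exact: unitmx_1_add_psd_mul (Omega_psd k) psdP.
Qed.

Lemma Pseq_psd k : sym_psd (P k).
Proof.
elim: k => [//|k IH]; rewrite PseqS_update //.
by have := sym_psd_congr (M k.+1)^T (sym_psd_update IH (Omega_psd k)); rewrite trmxK.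
Qed.

Lemma colspace_PseqS k : M k.+1 \in unitmx -> colspace_eq (P k.+1) (M k.+1 *m P k).
Proof.
move=> uM; rewrite PseqS_update; last exact: Pseq_psd.
apply: colspace_eq_trans (colspace_eq_mulmx_unitr _ _) _; first by rewrite unitmx_tr.
apply/colspace_eq_mull/colspace_eq_mulmx_unitr; rewrite unitmx_inv.
exact: unitmx_1_add_psd_mul (Omega_psd k) (Pseq_psd k).
Qed.
End CovarianceRecursion.

Theorem mainTheorem4 (R : realFieldType) (n d : nat)
  (M : nat -> 'M[R]_n) (H : nat -> 'M[R]_(d, n)) (Rm : nat -> 'M[R]_d)
  (P0 : 'M[R]_n) :
  (0 < n)%N -> (0 < d)%N ->
  (forall k, (1 <= k)%N -> M k \in unitmx) ->
  (forall k, sym_pd (Rm k)) ->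
  sym_psd P0 ->
  forall k : nat,
    \rank (Pseq M H Rm P0 k.+1) = \rank (Pseq M H Rm P0 k) /\
    colspace_eq (Pseq M H Rm P0 k) (Mprod M k *m P0).
Proof.
move=> _ _ uM pdR psdP0.
have stepP k : colspace_eq (Pseq M H Rm P0 k.+1) (M k.+1 *m Pseq M H Rm P0 k).
  by apply: colspace_PseqS => //; apply: uM.
move=> k; split.
  by rewrite (colspace_eq_rank (stepP k)) mxrank_mul_unitl ?uM.
elim: k => [|k IH]; first by rewrite mul1mx; apply: colspace_eq_refl.
apply: colspace_eq_trans (stepP k) _; rewrite [Mprod M k.+1]/= -mulmxA.
exact: colspace_eq_mull.
Qed.
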